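(* Let $L$ be a multisorted algebra in the quantifier-free signature satisfying axioms (1), (2), (3), (5), (6), and let $F$ be a prime filter on sort $n$ of $L$. Let $F_1,\dots,F_n$ be distinct symbols and $W=\{F_1,\dots,F_n\}$. Define $\varphi\colon L\to A(W)$ on each sort $k$ by: for each substitution $\alpha\colon k\to n$, $\alpha^{\mathrm{tuple}}(F_1,\dots,F_n)\in\varphi(r)$ if and only if $\alpha(r)\in F$. Then $\varphi$ is a morphism of quantifier-free algebras.
   Context: Signature. There is a sort $n$ for each natural number $n\ge 0$. For every function $\alpha\colon\{1,\dots,n\}\to\{1,\dots,k\}$ there is a unary function symbol (''substitution'') $\alpha\colon n\to k$ (argument of sort $n$, value of sort $k$). For each sort there are constants $0,1$, binary operations $\vee,\wedge$, and unary $\neg$ (the quantifier-free signature). For substitutions $\alpha\colon k\to n$, $\beta\colon n\to m$, $\beta\circ\alpha\colon k\to m$ is the substitution symbol of the composite function. For a set $W$: $\alpha^{\mathrm{tuple}}(x_1,\dots,x_k)=(x_{\alpha(1)},\dots,x_{\alpha(n)})$, $\alpha^{\mathrm{relation}}(r)=\{\bar x\in W^k:\alpha^{\mathrm{tuple}}(\bar x)\in r\}$. The quantifier-free algebra $A(W)$ interprets sort $n$ as $\mathcal P(W^n)$, $\alpha$ as $\alpha^{\mathrm{relation}}$, and $0,1,\vee,\wedge,\neg$ as $\emptyset,W^n,\cup,\cap$, complement. Since the $F_i$ are distinct, every tuple from $W$ of length $k$ equals $\alpha^{\mathrm{tuple}}(F_1,\dots,F_n)$ for exactly one substitution $\alpha\colon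 k\to n$. Axioms: (1) each sort is a bounded distributive lattice under $0,1,\vee,\wedge$; (2) substitutions preserve $0,1,\vee,\wedge$; (3) $(\beta\circ\alpha)(r)=\beta(\alpha(r))$; (5) $\alpha(\neg r)=\neg\alpha(r)$; (6) $r\vee\neg r=1$, $r\wedge\neg r=0$. A prime filter is a proper, nonempty, upward-closed, $\wedge$-closed subset of a sort such that $x\vee y\in F$ implies $x\in F$ or $y\in F$. *)

From mathcomp Require Import all_boot.
Set Implicit Arguments. Unset Strict Implicit. Unset Printing Implicit Defensive.

(* Sorts are natural numbers m; {1..m} is rendered as 'I_m.
   A substitution symbol alpha : m -> p is a function {1..m} -> {1..p},
   i.e. alpha : {ffun 'I_m -> 'I_p}; it maps sort m to sort p. *)
Record qf_ops := QfOps {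
  qcar  : nat -> Type;
  qsub  : forall m p : nat, {ffun 'I_m -> 'I_p} -> qcar m -> qcar p;
  qzero : forall m, qcar m;
  qone  : forall m, qcar m;
  qjoin : forall m, qcar m -> qcar m -> qcar m;
  qmeet : forall m, qcar m -> qcar m -> qcar m;
  qneg  : forall m, qcar m -> qcar m
}.
Arguments qsub {q m p}.
Arguments qzero {q m}.
Arguments qone {q m}.
Arguments qjoin {q m}.
Arguments qmeet {q m}.
Arguments qneg {q m}.

Definition subst_comp k n m (alpha : {ffun 'I_k -> 'I_n}) (beta : {ffun 'I_n -> 'I_m})
  : {ffun 'I_k -> 'I_m} := [ffun i => beta (alpha i)].

Definition ax1 (L : qf_ops) : Prop := forall m (x y z : qcar L m),
  qjoin x (qjoin y z) = qjoin (qjoin x y) z /\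
  qmeet x (qmeet y z) = qmeet (qmeet x y) z /\
  qjoin x y = qjoin y x /\
  qmeet x y = qmeet y x /\
  qjoin x (qmeet x y) = x /\
  qmeet x (qjoin x y) = x /\
  qmeet x (qjoin y z) = qjoin (qmeet x y) (qmeet x z) /\
  qjoin x qzero = x /\
  qmeet x qone = x.

Definition ax2 (L : qf_ops) : Prop :=
  forall m p (alpha : {ffun 'I_m -> 'I_p}) (x y : qcar L m),
  [/\ qsub alpha (@qzero L m) = qzero,
      qsub alpha (@qone L m) = qone,
      qsub alpha (qjoin x y) = qjoin (qsub alpha x) (qsub alpha y)
    & qsub alpha (qmeet x y) = qmeet (qsub alpha x) (qsub alpha y)].

Definition ax3 (L : qf_ops) : Prop :=
  forall k n m (alpha : {ffun 'I_k -> 'I_n}) (beta : {ffun 'I_n -> 'I_m}) (r : qcar L k),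
  qsub (subst_comp alpha beta) r = qsub beta (qsub alpha r).

Definition ax5 (L : qf_ops) : Prop :=
  forall m p (alpha : {ffun 'I_m -> 'I_p}) (r : qcar L m),
  qsub alpha (qneg r) = qneg (qsub alpha r).

Definition ax6 (L : qf_ops) : Prop := forall m (r : qcar L m),
  qjoin r (qneg r) = qone /\ qmeet r (qneg r) = qzero.

Definition qle (L : qf_ops) m (x y : qcar L m) : Prop := qmeet x y = x.

Definition prime_filter (L : qf_ops) n (F : qcar L n -> Prop) : Prop :=
  [/\ (exists x, ~ F x),
      (exists x, F x),
      (forall x y, F x -> qle x y -> F y),
      (forall x y, F x -> F y -> F (qmeet x y))
    & (forall x y, F (qjoin x y) -> F x \/ F y)].

Definition tuple_sub (W : finType) m p (alpha : {ffun 'I_m -> 'I_p})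
  (x : {ffun 'I_p -> W}) : {ffun 'I_m -> W} := [ffun i => x (alpha i)].

Definition rel_sub (W : finType) m p (alpha : {ffun 'I_m -> 'I_p})
  (r : {set {ffun 'I_m -> W}}) : {set {ffun 'I_p -> W}} :=
  [set x | tuple_sub alpha x \in r].

Definition A_alg (W : finType) : qf_ops :=
  @QfOps (fun m => {set {ffun 'I_m -> W}})
    (fun m p alpha r => rel_sub alpha r)
    (fun m => set0) (fun m => setT)
    (fun m r s => r :|: s) (fun m r s => r :&: s)
    (fun m r => ~: r).

Definition qf_morphism (L M : qf_ops) (phi : forall m, qcar L m -> qcar M m) : Prop :=
  forall m,
  phi m qzero = qzero /\
  phi m qone = qone /\
  (forall x y, phi m (qjoin x y) = qjoin (phi m x) (phi m y)) /\
  (forall x y, phi m (qmeet x y) = qmeet (phi m x) (phi m y)) /\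
  (forall x, phi m (qneg x) = qneg (phi m x)) /\
  (forall p (alpha : {ffun 'I_m -> 'I_p}) x,
     phi p (qsub alpha x) = qsub alpha (phi m x)).

From mathcomp Require Import all_boot.
From Stdlib Require Import Setoid.

Set Implicit Arguments.
Unset Strict Implicit.
Unset Printing Implicit Defensive.

(* A prime filter on sort n is a complete "truth assignment" on that sort:
   it preserves 0, 1, joins, meets and (by axiom (6)) negations.  Since F is
   onto W, every k-tuple over W is a generic tuple [alpha^tuple(F_1,...,F_n)],
   so a subset of W^k is determined by which generic tuples it contains;
   checking each operation of A(W) on generic tuples reduces, via axioms (2),
   (3) and (5), to these properties of the filter. *)

Section LatticeLaws.

Variables (L : qf_ops) (m : nat).
Hypothesis lattice : ax1 L.
Implicit Types x y z : qcar L m.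

Lemma qjoinC x y : qjoin x y = qjoin y x.
Proof. by have [_ [_ [? _]]] := lattice x y x. Qed.

Lemma qmeetC x y : qmeet x y = qmeet y x.
Proof. by have [_ [_ [_ [? _]]]] := lattice x y x. Qed.

Lemma qmeetA x y z : qmeet x (qmeet y z) = qmeet (qmeet x y) z.
Proof. by have [_ [? _]] := lattice x y z. Qed.

Lemma qjoinKI x y : qjoin x (qmeet x y) = x.
Proof. by have [_ [_ [_ [_ [? _]]]]] := lattice x y x. Qed.

Lemma qmeetKU x y : qmeet x (qjoin x y) = x.
Proof. by have [_ [_ [_ [_ [_ [? _]]]]]] := lattice x y x. Qed.

Lemma qjoinx0 x : qjoin x qzero = x.
Proof. by have [_ [_ [_ [_ [_ [_ [_ [? _]]]]]]]] := lattice x x x. Qed.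

Lemma qmeetx1 x : qmeet x qone = x.
Proof. by have [_ [_ [_ [_ [_ [_ [_ [_ ?]]]]]]]] := lattice x x x. Qed.

Lemma qmeetxx x : qmeet x x = x.
Proof. by rewrite -{2}(qjoinKI x x) qmeetKU. Qed.

Lemma qmeet0x x : qmeet qzero x = qzero.
Proof. by rewrite -{1}(qjoinx0 x) qjoinC qmeetKU. Qed.

Lemma qle1 x : qle x qone.
Proof. exact: qmeetx1. Qed.

Lemma qle0 x : qle qzero x.
Proof. exact: qmeet0x. Qed.

Lemma qle_joinl x y : qle x (qjoin x y).
Proof. exact: qmeetKU. Qed.

Lemma qle_joinr x y : qle y (qjoin x y).
Proof. by rewrite qjoinC; apply: qle_joinl. Qed.

Lemma qle_meetl x y : qle (qmeet x y) x.
Proof. by rewrite /qle qmeetC qmeetA qmeetxx. Qed.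

Lemma qle_meetr x y : qle (qmeet x y) y.
Proof. by rewrite /qle -qmeetA qmeetxx. Qed.

End LatticeLaws.

Section PrimeFilter.

Variables (L : qf_ops) (n : nat) (Filt : qcar L n -> Prop).
Hypotheses (lattice : ax1 L) (complemented : ax6 L) (primeF : prime_filter Filt).
Implicit Types a b : qcar L n.

Lemma prime_filter_up a b : Filt a -> qle a b -> Filt b.
Proof. by case: primeF => _ _ up _ _; apply: up. Qed.

Lemma prime_filter_one : Filt qone.
Proof.
case: primeF => _ [a Fa] _ _ _.
by apply: prime_filter_up Fa _; apply: qle1.
Qed.

Lemma prime_filter_zero : ~ Filt qzero.
Proof.
case: primeF => [[a nFa] _ _ _ _ F0].
by apply/nFa/(prime_filter_up F0); apply: qle0.
Qed.

Lemma prime_filter_join a b : Filt (qjoin a b) <-> Filt a \/ Filt b.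
Proof.
split; first by case: primeF => _ _ _ _; apply.
by case=> Fab; apply: (prime_filter_up Fab); [apply: qle_joinl | apply: qle_joinr].
Qed.

Lemma prime_filter_meet a b : Filt (qmeet a b) <-> Filt a /\ Filt b.
Proof.
split; last by case: primeF => _ _ _ meetF _ [Fa Fb]; apply: meetF.
by move=> Fab; split; apply: (prime_filter_up Fab);
  [apply: qle_meetl | apply: qle_meetr].
Qed.

Lemma prime_filter_neg a : Filt (qneg a) <-> ~ Filt a.
Proof.
have [join_compl meet_compl] := complemented a.
split=> [Fna Fa | nFa].
  by apply: prime_filter_zero; rewrite -meet_compl; apply/prime_filter_meet.
have : Filt (qjoin a (qneg a)) by rewrite join_compl; apply: prime_filter_one.
by case/prime_filter_join.
Qed.

End PrimeFilter.

Section GenericTuples.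

Variables (W : finType) (n : nat) (F : 'I_n -> W).
Hypothesis F_onto : forall w : W, exists i, F i = w.

Local Notation generic alpha := (tuple_sub alpha [ffun i => F i]).

Lemma tuple_sub_onto k (x : {ffun 'I_k -> W}) :
  exists alpha : {ffun 'I_k -> 'I_n}, x = generic alpha.
Proof.
have [g Fg] := fin_all_exists (fun i : 'I_k => F_onto (x i)).
by exists [ffun i => g i]; apply/ffunP => i; rewrite !ffunE.
Qed.

Lemma eq_set_generic k (S T : {set {ffun 'I_k -> W}}) :
  (forall alpha, generic alpha \in S <-> generic alpha \in T) -> S = T.
Proof.
move=> eqST; apply/setP => x; have [alpha ->] := tuple_sub_onto x.
by apply/idP/idP => /eqST.
Qed.

End GenericTuples.

Lemma tuple_sub_comp (W : finType) k m p (alpha : {ffun 'I_k -> 'I_m})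
    (beta : {ffun 'I_m -> 'I_p}) (x : {ffun 'I_p -> W}) :
  tuple_sub alpha (tuple_sub beta x) = tuple_sub (subst_comp alpha beta) x.
Proof. by apply/ffunP => i; rewrite !ffunE. Qed.

Theorem lemma4p2 (L : qf_ops)
  (H1 : ax1 L) (H2 : ax2 L) (H3 : ax3 L) (H5 : ax5 L) (H6 : ax6 L)
  (n : nat) (Filt : qcar L n -> Prop) (HF : prime_filter Filt)
  (W : finType) (F : 'I_n -> W) (F_distinct : injective F)
  (F_onto : forall w : W, exists i, F i = w)
  (phi : forall k, qcar L k -> qcar (A_alg W) k)
  (phi_def : forall k (alpha : {ffun 'I_k -> 'I_n}) (r : qcar L k),
      (tuple_sub alpha [ffun i => F i] \in phi k r) <-> Filt (qsub alpha r)) :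
  qf_morphism phi.
Proof.
move=> m; split; [|split; [|split; [|split; [|split]]]].
- apply: (eq_set_generic F_onto) => alpha; rewrite phi_def inE.
  by have [-> _ _ _] := H2 m n alpha qzero qzero; split=> // /(prime_filter_zero H1 HF).
- apply: (eq_set_generic F_onto) => alpha; rewrite phi_def inE.
  by have [_ -> _ _] := H2 m n alpha qzero qzero; split=> // _; apply: prime_filter_one H1 HF.
- move=> x y; apply: (eq_set_generic F_onto) => alpha; rewrite phi_def inE.
  have [_ _ -> _] := H2 m n alpha x y.
  by rewrite prime_filter_join // -!phi_def; split=> /orP.
- move=> x y; apply: (eq_set_generic F_onto) => alpha; rewrite phi_def inE.
  have [_ _ _ ->] := H2 m n alpha x y.
  by rewrite prime_filter_meet // -!phi_def; split=> /andP.
- move=> x; apply: (eq_set_generic F_onto) => alpha.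
  by rewrite phi_def inE H5 prime_filter_neg // -phi_def; split=> /negP.
- move=> p beta x; apply: (eq_set_generic F_onto) => alpha.
  by rewrite inE tuple_sub_comp !phi_def H3.
Qed.
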